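(* Let $u\in V$ be quasiprimary of weight $N\ge1$, let $f_0,\dots,f_{2N-2}$ be Laurent series, $\psi^{(0)}_N(x,y)=\frac1{x-y}+\sum_{\ell=0}^{2N-2}f_\ell(x)y^\ell$ and $\mathcal E^j_t(y)=\sum_{\ell=0}^{2N-2}\partial^{(t)}f_\ell(y)\,\partial_y^{(j)}(y^\ell)$. Then for all $t\ge0$ and $v_1,\dots,v_n\in V$, \begin{align*} Z^{(0)}(u(-t-1)v_1,y_1;v_2,y_2;\dots;v_n,y_n)=&\sum_{j\ge0}\mathcal E^j_t(y_1)\,Z^{(0)}(u(j)v_1,y_1;v_2,y_2;\dots;v_n,y_n)\\ &+\sum_{k=2}^n\sum_{j\ge0}\partial^{(t,j)}\psi^{(0)}_N(y_1,y_k)\,Z^{(0)}(v_1,y_1;\dots;u(j)v_k,y_k;\dots;v_n,y_n). \end{align*}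
   Context: $V=\bigoplus_{n\ge0}V_n$ is a simple, self-dual vertex operator algebra (VOA) of strong CFT type ($V_0=\mathbb C\mathbb 1$, $L(1)V_1=0$), with vertex operators $Y(u,z)=\sum_{n\in\mathbb Z}u(n)z^{-n-1}$, Virasoro modes $L(n)$, and $\mathrm{wt}(v)=n$ for $v\in V_n$. A vector $u$ is quasiprimary if $L(1)u=0$. $\langle\cdot,\cdot\rangle$ is the unique invariant nondegenerate bilinear form on $V$ with $\langle\mathbb 1,\mathbb 1\rangle=1$. The genus zero $n$-point function is $Z^{(0)}(v_1,y_1;\dots;v_n,y_n)=\langle \mathbb 1,Y(v_1,y_1)\cdots Y(v_n,y_n)\mathbb 1\rangle$. Notation: $\partial^{(j)}=\frac1{j!}\partial^j$, $\partial^{(i,j)}F(x,y)=\partial_x^{(i)}\partial_y^{(j)}F(x,y)$. *)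

From HB Require Import structures.
From mathcomp Require Import all_boot all_order all_algebra.
From mathcomp Require Import boolp classical_sets fsbigop reals.
From mathcomp Require Import complex.

Set Implicit Arguments.
Unset Strict Implicit.
Unset Printing Implicit Defensive.

Import Order.TTheory GRing.Theory Num.Theory.
Local Open Scope ring_scope.

(* support.  [fsum a] is the sum of the finitely many non-zero terms of a. *)
(* (fsbigop convention: it is 0 if the support is infinite; every fsum      *)
(* below has provably finite support.)                        *)
Definition fsum (M : nmodType) (I : choiceType) (a : I -> M) : M :=
  (\sum_(i \in [set: I]) a i)%R.

Section VOADefs.
Variable C : fieldType.

Definition binz (x : int) (k : nat) : C :=
  (\prod_(i < k) (x%:~R - i%:R)) / (k`!)%:R.

(* Vertex operator algebras (Lepowsky-Li / FLM definition), with modes     *)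
(* Y(u,z) = \sum_n u(n) z^{-n-1}; here  vmode u n w = u(n) w.              *)
(* L(n) = omega(n+1).                                                       *)
Record VOA := {
  vspace :> lmodType C;
  vmode : vspace -> int -> vspace -> vspace;
  vacuum : vspace;
  conformal : vspace;
  central_charge : C;
  vmode_linl : forall (n : int) (w : vspace) (a : C) (u1 u2 : vspace),
      vmode (a *: u1 + u2) n w = a *: vmode u1 n w + vmode u2 n w;
  vmode_linr : forall (u : vspace) (n : int) (a : C) (w1 w2 : vspace),
      vmode u n (a *: w1 + w2) = a *: vmode u n w1 + vmode u n w2;
  vmode_trunc : forall u w : vspace,
      exists N : int, forall n : int, N <= n -> vmode u n w = 0;
  vacuum_mode : forall (n : int) (w : vspace),
      vmode vacuum n w = if n == -1 then w else 0;
  creation_prop : forall u : vspace,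
      vmode u (-1) vacuum = u /\ (forall n : int, 0 <= n -> vmode u n vacuum = 0);
  (* Jacobi identity, in the form of the Borcherds identity *)
  borcherds : forall (u v w : vspace) (p q r : int),
      fsum (fun i : nat => binz p i *: vmode (vmode u (r + i%:Z) v) (p + q - i%:Z) w)
      = fsum (fun i : nat => ((-1) ^+ i * binz r i) *:
              (vmode u (p + r - i%:Z) (vmode v (q + i%:Z) w)
               - (-1) ^+ `|r|%N *: vmode v (q + r - i%:Z) (vmode u (p + i%:Z) w)));
  virasoro : forall (m n : int) (w : vspace),
      vmode conformal (m + 1) (vmode conformal (n + 1) w)
      - vmode conformal (n + 1) (vmode conformal (m + 1) w)
      = (m - n)%:~R *: vmode conformal (m + n + 1) w
        + (if m + n == 0 then ((m ^+ 3 - m)%:~R / 12%:R * central_charge) *: w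
           else 0);
  (* L(-1)-derivative property: Y(L(-1)u, z) = d/dz Y(u, z) *)
  translation : forall (u : vspace) (n : int) (w : vspace),
      vmode (vmode conformal 0 u) n w = - (n%:~R) *: vmode u (n - 1) w;
  (* V = \oplus_{n >= 0} V_n with V_n the L(0)-eigenspace of eigenvalue n *)
  grading : forall w : vspace, exists s : seq (nat * vspace),
      (forall p, p \in s -> vmode conformal 1 p.2 = (p.1)%:R *: p.2)
      /\ w = \sum_(p <- s) p.2;
  fin_dim : forall k : nat, exists b : seq vspace,
      forall w, vmode conformal 1 w = k%:R *: w ->
        exists c : nat -> C, w = \sum_(i < size b) c i *: b`_i;
  conformal_wt : vmode conformal 1 conformal = 2%:R *: conformal
}.

Arguments vmode : clear implicits.
Arguments vacuum : clear implicits.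
Arguments conformal : clear implicits.
Arguments central_charge : clear implicits.

Variable V : VOA.

Definition Lv (n : int) (w : V) : V := vmode V (conformal V) (n + 1) w.

Definition has_weight (k : nat) (u : V) : Prop := Lv 0 u = k%:R *: u.

Definition quasiprimary (u : V) : Prop := Lv 1 u = 0.

Definition strong_CFT_type : Prop :=
  (forall w : V, has_weight 0 w -> exists a : C, w = a *: vacuum V)
  /\ (forall w : V, has_weight 1 w -> Lv 1 w = 0).

Definition simple_VOA : Prop :=
  (exists w : V, w != 0) /\
  forall I : V -> Prop,
    I 0 -> (forall (a : C) (x y : V), I x -> I y -> I (a *: x + y)) ->
    (forall (u : V) (n : int) (w : V), I w -> I (vmode V u n w)) ->
    (forall (u : V) (n : int) (w : V), I w -> I (vmode V w n u)) ->
    (forall w, I w -> w = 0) \/ (forall w, I w).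

(* invariant bilinear form:
   <Y(u,z)v, w> = <v, Y(e^{zL(1)} (-z^{-2})^{L(0)} u, z^{-1}) w>,
   written in modes for homogeneous u of weight k. *)
Definition invariant_bilinear_form (B : V -> V -> C) : Prop :=
  (forall (a : C) (x y z : V), B (a *: x + y) z = a * B x z + B y z) /\
  (forall (a : C) (x y z : V), B z (a *: x + y) = a * B z x + B z y) /\
  (forall (k : nat) (u : V), has_weight k u ->
     forall (n : int) (v w : V),
       B (vmode V u n v) w =
       (-1) ^+ k * fsum (fun i : nat =>
          (i`!%:R)^-1 * B v (vmode V (iter i (Lv 1) u)
                                  (2 * k%:Z - n - i%:Z - 2) w))).

Definition nondegenerate_form (B : V -> V -> C) : Prop :=
  forall x : V, (forall y : V, B x y = 0) -> x = 0.

(* genus zero n-point function  <1, Y(v_0,y_0) ... Y(v_{n-1},y_{n-1}) 1>,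
   as a formal series in y_0, ..., y_{n-1} (the expansion in
   |y_0| > ... > |y_{n-1}|):  Z B vs e  is the coefficient of
   \prod_i y_i^{e i}, i.e. <1, v_0(-e_0-1) ... v_{n-1}(-e_{n-1}-1) 1>. *)
Definition applyModes (n : nat) (vs : 'I_n -> V) (ms : 'I_n -> int) : V :=
  foldr (fun i acc => vmode V (vs i) (ms i) acc) (vacuum V) (enum 'I_n).

Definition Z0 (B : V -> V -> C) (n : nat) (vs : 'I_n -> V)
  : ('I_n -> int) -> C :=
  fun e => B (vacuum V) (applyModes vs (fun i => - e i - 1)).

End VOADefs.

Arguments vmode {C} _ _ _ _.
Arguments vacuum {C} _.
Arguments conformal {C} _.
Arguments central_charge {C} _.

Definition upd (I : eqType) (T : Type) (g : I -> T) (i : I) (x : T) : I -> T :=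
  fun j => if j == i then x else g j.

Section Series.
Variable C : fieldType.

Definition laurent (g : int -> C) : Prop :=
  exists M : int, forall m : int, m < M -> g m = 0.

(* divided derivative  \partial^{(t)} = (1/t!) d^t/dy^t  on Laurent series *)
Definition derL (t : nat) (g : int -> C) : int -> C :=
  fun e => binz C (e + t%:Z) t * g (e + t%:Z).

Definition monoL (l : int) : int -> C := fun e => (e == l)%:R.

Definition mulL (g h : int -> C) : int -> C :=
  fun e => fsum (fun a : int => g a * h (e - a)).

(* two-variable series F(x,y) = \sum F a b x^a y^b *)
(* expansion of 1/(x-y) in |x| > |y| : \sum_{m>=0} x^{-m-1} y^m *)
Definition inv_xy (a b : int) : C := if (0 <= b) && (a == - b - 1) then 1 else 0.

Definition der2 (t j : nat) (F : int -> int -> C) : int -> int -> C :=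
  fun a b => binz C (a + t%:Z) t * binz C (b + j%:Z) j * F (a + t%:Z) (b + j%:Z).

Definition psi0 (N : nat) (f : nat -> int -> C) : int -> int -> C :=
  fun a b => inv_xy a b + \sum_(l < N.*2.-1) f l a * monoL l%:Z b.

Definition calE (N : nat) (f : nat -> int -> C) (t j : nat) : int -> C :=
  fun e => \sum_(l < N.*2.-1) mulL (derL t (f l)) (derL j (monoL l%:Z)) e.

Definition mul1 (n : nat) (i : 'I_n) (g : int -> C) (S : ('I_n -> int) -> C)
  : ('I_n -> int) -> C :=
  fun e => fsum (fun a : int => g a * S (upd e i (e i - a))).

Definition mul2 (n : nat) (i k : 'I_n) (F : int -> int -> C)
  (S : ('I_n -> int) -> C) : ('I_n -> int) -> C :=
  fun e => fsum (fun ab : int * int =>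
     F ab.1 ab.2 * S (upd (upd e i (e i - ab.1)) k (e k - ab.2))).

End Series.

From HB Require Import structures.
From mathcomp Require Import all_boot all_order all_algebra.
From mathcomp Require Import boolp classical_sets fsbigop reals.
From mathcomp Require Import complex.
From mathcomp.algebra_tactics Require Import ring.
From mathcomp.zify Require Import zify.
Import Order.TTheory GRing.Theory Num.Theory.
Local Open Scope ring_scope.
Set Implicit Arguments.
Unset Strict Implicit.
Unset Printing Implicit Defensive.

(* Expand [u(-t-1) v_1] by the associativity formula. Every term [u(-t-1-i)(...)]
   pairs to zero with the vacuum, since invariance of the form and quasiprimarity
   give [<1, u(m) w> = 0] for [m <= 2N-2]. The remaining terms [v_1(...) u(i)(...)]
   are moved to the vacuum by the commutator formula and reproduce the [1/(x-y)]
   part of [psi_N]. The terms of the right-hand side involving the [f_l] assemble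
   into [<1, u(l) ...>] with [l <= 2N-2], hence cancel. All sums are finite because
   modes are truncated. *)

Section FiniteSupportSums.
Variables (M : nmodType) (I : choiceType).
Implicit Types (a b : I -> M) (r : seq I).

Lemma fsumE r a : uniq r -> (forall x, x \notin r -> a x = 0) ->
  fsum a = \sum_(x <- r) a x.
Proof.
move=> ur ha; rewrite /fsum.
have -> : [set: I]%classic = [set` (predT : {pred I})]%classic by apply/seteqP.
by rewrite (@bigfs M 0 +%R I r predT a ur (fun x _ => ha x)).
Qed.

Lemma eq_fsum a b : a =1 b -> fsum a = fsum b.
Proof. by move=> /funext ->. Qed.

Lemma fsum_eq0 a : a =1 (fun=> 0) -> fsum a = 0.
Proof. by move=> h; rewrite (@fsumE [::]) ?big_nil // => x _; apply: h. Qed.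

Lemma fsumD r1 r2 a b :
  (forall x, x \notin r1 -> a x = 0) -> (forall x, x \notin r2 -> b x = 0) ->
  uniq r1 -> uniq r2 ->
  fsum (fun x => a x + b x) = \sum_(x <- r1) a x + \sum_(x <- r2) b x.
Proof.
move=> ha hb u1 u2; rewrite -(fsumE u1 ha) -(fsumE u2 hb).
have out x : x \notin undup (r1 ++ r2) -> a x = 0 /\ b x = 0.
  by rewrite mem_undup mem_cat negb_or => /andP[/ha -> /hb ->].
rewrite !(@fsumE (undup (r1 ++ r2))) ?undup_uniq ?big_split //.
- by move=> x /out[].
- by move=> x /out[].
- by move=> x /out[-> ->]; rewrite addr0.
Qed.

End FiniteSupportSums.

Lemma fsum_nat_ord (M : nmodType) (K : nat) (a : nat -> M) :
  (forall i, (K <= i)%N -> a i = 0) -> fsum a = \sum_(i < K) a i.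
Proof.
move=> h; rewrite (@fsumE _ _ (iota 0 K)) ?iota_uniq //.
  by rewrite -(big_mkord xpredT) /index_iota subn0.
by move=> x; rewrite mem_iota add0n /= -leqNgt; apply: h.
Qed.

Lemma big_iota0_ord (M : nmodType) (K : nat) (F : nat -> M) :
  \sum_(s <- iota 0 K) F s = \sum_(s < K) F s.
Proof. by rewrite -(big_mkord xpredT F) /index_iota subn0. Qed.

Lemma sum_ord_widen (M : nmodType) (F : nat -> M) K1 K2 : (K1 <= K2)%N ->
  (forall j, (K1 <= j)%N -> F j = 0) -> \sum_(j < K1) F j = \sum_(j < K2) F j.
Proof.
move=> hK h; rewrite -(fsum_nat_ord h) (@fsum_nat_ord _ K2) // => j hj.
exact/h/(leq_trans hK hj).
Qed.

Definition int_range (lo : int) (K : nat) : seq int := [seq lo + i%:Z | i <- iota 0 K].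

Lemma int_range_uniq lo K : uniq (int_range lo K).
Proof. by rewrite map_inj_uniq ?iota_uniq // => x y /addrI []. Qed.

Lemma mem_int_range lo K x : (x \in int_range lo K) = (lo <= x < lo + K%:Z).
Proof.
apply/mapP/andP => [[i + ->]|[h1 h2]].
  by rewrite mem_iota add0n /= => hi; rewrite lerDl ltrD2l ltz_nat.
exists `|x - lo|%N; last by rewrite gez0_abs ?subr_ge0 // addrCA subrr addr0.
by rewrite mem_iota add0n /= -ltz_nat gez0_abs ?subr_ge0 // ltrBlDl.
Qed.

Lemma fsum_int_range (M : nmodType) lo K (a : int -> M) :
  (forall x, ~~ (lo <= x < lo + K%:Z) -> a x = 0) ->
  fsum a = \sum_(x <- int_range lo K) a x.
Proof.
move=> h; apply: fsumE; first exact: int_range_uniq.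
by move=> x; rewrite mem_int_range; apply: h.
Qed.

Lemma fsum_shift (M : nmodType) (d : int) (a : int -> M) :
  fsum (fun x => a (x + d)) = fsum a.
Proof.
rewrite /fsum (reindex_fsbigT (fun x : int => x + d) a) //.
by exists (fun x => x - d) => x; rewrite ?addrK ?subrK.
Qed.

Lemma bin_addC m n : 'C(m + n, m) = 'C(m + n, n).
Proof. by rewrite -bin_sub ?leq_addr // addKn. Qed.

Section GeneralizedBinomial.
Variable C : numFieldType.

Lemma prod_natB_ffact (k j : nat) :
  \prod_(i < j) ((k%:R : C) - i%:R) = (k ^_ j)%:R.
Proof.
elim: j => [|j IH]; first by rewrite big_ord0 ffactn0.
rewrite big_ord_recr /= IH ffactnSr.
case: (leqP j k) => hjk; first by rewrite natrM natrB.
by rewrite ffact_small // !mul0r.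
Qed.

Lemma prod_natS_ffact (s t : nat) :
  \prod_(i < t) ((s.+1 + i)%:R : C) = ((s + t) ^_ t)%:R.
Proof.
elim: t => [|t IH]; first by rewrite big_ord0 ffactn0.
by rewrite big_ord_recr /= IH addnS ffactSS natrM mulrC addSn.
Qed.

Lemma binz_nat (k j : nat) : binz C k%:Z j = 'C(k, j)%:R.
Proof.
rewrite /binz (eq_bigr (fun i : 'I_j => (k%:R : C) - i%:R)); last first.
  by move=> i _; rewrite pmulrn.
rewrite prod_natB_ffact -bin_ffact natrM mulfK //.
by rewrite pnatr_eq0 -lt0n fact_gt0.
Qed.

Lemma binz0 j : binz C 0 j = (j == 0)%N%:R.
Proof. by rewrite (binz_nat 0) bin0n. Qed.

Lemma binz_neg (s t : nat) : binz C (- s%:Z - 1) t = (-1) ^+ t * 'C(s + t, t)%:R.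
Proof.
rewrite /binz (eq_bigr (fun i : 'I_t => -1 * ((s.+1 + i)%:R : C))); last first.
  by move=> i _; rewrite natrD -addn1 natrD mulN1r; ring.
rewrite big_split /= prodr_const card_ord prod_natS_ffact -bin_ffact natrM.
by rewrite -mulrA mulfK // pnatr_eq0 -lt0n fact_gt0.
Qed.

End GeneralizedBinomial.

Section ModeLinearity.
Variables (C : numFieldType) (V : VOA C).
Implicit Types (u v w : V) (n : int).

Lemma vmode0r u n : vmode V u n 0 = 0.
Proof. by have := vmode_linr u n (-1) 0 0; rewrite scaler0 add0r scaleN1r addNr. Qed.

Lemma vmode0l n w : vmode V 0 n w = 0.
Proof. by have := vmode_linl n w (-1) 0 0; rewrite scaler0 add0r scaleN1r addNr. Qed.

Lemma vmodeDr u n w1 w2 : vmode V u n (w1 + w2) = vmode V u n w1 + vmode V u n w2.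
Proof. by have := vmode_linr u n 1 w1 w2; rewrite !scale1r. Qed.

Lemma vmodeZr u n (a : C) w : vmode V u n (a *: w) = a *: vmode V u n w.
Proof. by have := vmode_linr u n a w 0; rewrite !addr0 vmode0r addr0. Qed.

Lemma vmode_sumr (I : Type) (r : seq I) (P : pred I) (F : I -> V) u n :
  vmode V u n (\sum_(i <- r | P i) F i) = \sum_(i <- r | P i) vmode V u n (F i).
Proof. exact: (big_morph _ (vmodeDr u n) (vmode0r u n)). Qed.

End ModeLinearity.

Section BilinearForm.
Variables (C : numFieldType) (V : VOA C) (B : V -> V -> C).
Hypothesis hB : invariant_bilinear_form B.
Implicit Types (x y z : V).

Lemma form0l z : B 0 z = 0.
Proof. by have := hB.1 (-1) 0 0 z; rewrite scaler0 add0r mulN1r addNr. Qed.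

Lemma form0r z : B z 0 = 0.
Proof. by have := hB.2.1 (-1) 0 0 z; rewrite scaler0 add0r mulN1r addNr. Qed.

Lemma formDr z x y : B z (x + y) = B z x + B z y.
Proof. by have := hB.2.1 1 x y z; rewrite scale1r mul1r. Qed.

Lemma formZr z a x : B z (a *: x) = a * B z x.
Proof. by have := hB.2.1 a x 0 z; rewrite !addr0 form0r addr0. Qed.

Lemma formBr z x y : B z (x - y) = B z x - B z y.
Proof. by rewrite -scaleN1r formDr formZr mulN1r. Qed.

Lemma form_sumr (I : Type) (r : seq I) (P : pred I) (F : I -> V) z :
  B z (\sum_(i <- r | P i) F i) = \sum_(i <- r | P i) B z (F i).
Proof. exact: (big_morph _ (formDr z) (form0r z)). Qed.

Lemma iter_L1_quasiprimary u i : quasiprimary u -> iter i.+1 (@Lv _ V 1) u = 0.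
Proof. by move=> hq; elim: i => [//|i IH]; rewrite iterS IH /Lv vmode0r. Qed.

(* Invariance turns [u(m)] into [u(2N-2-m)] acting on the vacuum, which vanishes
   for [m <= 2N-2]; quasiprimarity kills all the [L(1)]-corrections. *)
Lemma form_vacuum_mode_eq0 (N : nat) u (m : int) w :
  has_weight N u -> quasiprimary u -> m <= 2 * N%:Z - 2 ->
  B (vacuum V) (vmode V u m w) = 0.
Proof.
move=> hw hq hm.
have := hB.2.2 N u hw (2 * N%:Z - 2 - m) (vacuum V) w.
rewrite (proj2 (creation_prop u)) ?subr_ge0 // form0l.
rewrite (@fsumE _ _ [:: 0%N]) //; last first.
  by case=> [//|i] _; rewrite iter_L1_quasiprimary // vmode0l form0r mulr0.
rewrite big_seq1 /= fact0 invr1 mul1r.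
have -> : 2 * N%:Z - (2 * N%:Z - 2 - m) - 0%:Z - 2 = m by ring.
by move/esym/eqP; rewrite mulf_eq0 signr_eq0 => /eqP.
Qed.

End BilinearForm.

Section Borcherds.
Variables (C : numFieldType) (V : VOA C).
Implicit Types (u v w : V).

Lemma vmode_commutator u v w (i : nat) (m : int) :
  vmode V u i%:Z (vmode V v m w) = vmode V v m (vmode V u i%:Z w)
   + \sum_(j < i.+1) 'C(i, j)%:R *: vmode V (vmode V u j%:Z v) (i%:Z + m - j%:Z) w.
Proof.
have := borcherds u v w i%:Z m 0.
rewrite (@fsum_nat_ord _ i.+1); last first.
  by move=> k hk; rewrite binz_nat bin_small // scale0r.
rewrite (@fsumE _ _ [:: 0%N]) //; last first.
  by case=> [//|k] _; rewrite binz0 /= mulr0 scale0r.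
rewrite big_seq1 /= binz0 /= mulr1 expr0 scale1r !addr0 => h.
rewrite (eq_bigr (fun j : 'I_i.+1 =>
    binz C i j *: vmode V (vmode V u (0 + j%:Z) v) (i%:Z + m - j%:Z) w)).
  by rewrite h scale1r addrC subrK.
by move=> j _; rewrite binz_nat add0r.
Qed.

Lemma vmode_associator u v w (r q : int) :
  vmode V (vmode V u r v) q w = fsum (fun k : nat => ((-1) ^+ k * binz C r k) *:
    (vmode V u (r - k%:Z) (vmode V v (q + k%:Z) w)
     - (-1) ^+ `|r|%N *: vmode V v (q + r - k%:Z) (vmode V u k%:Z w))).
Proof.
have := borcherds u v w 0 q r.
rewrite (@fsumE _ _ [:: 0%N]) //; last first.
  by case=> [//|k] _; rewrite binz0 /= scale0r.
rewrite big_seq1 /= binz0 /= scale1r addr0 add0r subr0 => ->.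
by apply: eq_fsum => k; rewrite !add0r.
Qed.

End Borcherds.

Lemma upd_eq (I : eqType) (T : Type) (g : I -> T) i x : upd g i x i = x.
Proof. by rewrite /upd eqxx. Qed.

Lemma upd_neq (I : eqType) (T : Type) (g : I -> T) i x j : j != i -> upd g i x j = g j.
Proof. by rewrite /upd => /negbTE ->. Qed.

Section ModeProducts.
Variables (C : numFieldType) (V : VOA C) (I : eqType).
Implicit Types (vs : I -> V) (ms : I -> int) (s : seq I) (k : I).

Definition mprod vs ms s : V :=
  foldr (fun k acc => vmode V (vs k) (ms k) acc) (vacuum V) s.

Lemma eq_mprod vs ms vs' ms' s : {in s, vs =1 vs'} -> {in s, ms =1 ms'} ->
  mprod vs ms s = mprod vs' ms' s.
Proof.
elim: s => [//|k s IH] hv hm /=; rewrite hv ?hm ?mem_head //.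
by rewrite -/(mprod vs ms s) IH // => x hx; [apply: hv|apply: hm]; rewrite inE hx orbT.
Qed.

Lemma mprod_cat_eq0 vs ms s1 k s2 : vmode V (vs k) (ms k) (mprod vs ms s2) = 0 ->
  mprod vs ms (s1 ++ k :: s2) = 0.
Proof.
move=> h; rewrite /mprod foldr_cat /= -/(mprod vs ms s2) h.
by elim: s1 => [//|k1 s1 IH] /=; rewrite IH vmode0r.
Qed.

Lemma mprod_upd_notin vs ms k x y s : k \notin s ->
  mprod (upd vs k x) (upd ms k y) s = mprod vs ms s.
Proof.
by move=> hk; apply: eq_mprod => z hz; apply: upd_neq; apply: contraNneq hk => <-.
Qed.

Lemma mprod_commutator (u : V) (i : nat) vs ms s : uniq s ->
  vmode V u i%:Z (mprod vs ms s) = \sum_(k <- s) \sum_(j < i.+1) 'C(i, j)%:R *: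
     mprod (upd vs k (vmode V u j%:Z (vs k))) (upd ms k (ms k + i%:Z - j%:Z)) s.
Proof.
elim: s => [|k s IH]; first by rewrite big_nil /mprod /= (proj2 (creation_prop u)).
rewrite cons_uniq => /andP[hk hs]; rewrite big_cons /= vmode_commutator.
rewrite -/(mprod vs ms s) IH // vmode_sumr addrC; congr (_ + _).
  apply: eq_bigr => j _; rewrite !upd_eq mprod_upd_notin //.
  by rewrite (addrC i%:Z).
apply: eq_big_seq => k' hk'.
have hne : k != k' by apply: contraNneq hk => ->.
by rewrite vmode_sumr; apply: eq_bigr => j _; rewrite vmodeZr !upd_neq.
Qed.

End ModeProducts.

Definition eventually_ge (P : int -> Prop) :=
  exists K : nat, forall x : int, K%:Z <= x -> P x.

Lemma eventually_and (P Q : int -> Prop) :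
  eventually_ge P -> eventually_ge Q -> eventually_ge (fun x => P x /\ Q x).
Proof.
move=> [K1 h1] [K2 h2]; exists (maxn K1 K2) => x hx; split.
  by apply: h1; apply: le_trans hx; rewrite lez_nat leq_maxl.
by apply: h2; apply: le_trans hx; rewrite lez_nat leq_maxr.
Qed.

Lemma eventually_all (T : eqType) (s : seq T) (P : T -> int -> Prop) :
  (forall x, x \in s -> eventually_ge (P x)) ->
  eventually_ge (fun y => forall x, x \in s -> P x y).
Proof.
elim: s => [|a s IH] h; first by exists 0%N.
have [] := eventually_and (h a (mem_head a s)) (IH (fun x hx => h x (@mem_behead _ (a :: s) x hx))).
move=> K hK; exists K => y /hK[ha hs] x; rewrite inE => /orP[/eqP -> //|].
exact: hs.
Qed.

Lemma eventually_vmode0 (C : numFieldType) (V : VOA C) (u w : V) :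
  eventually_ge (fun x => vmode V u x w = 0).
Proof.
have [N hN] := vmode_trunc u w; exists `|N|%N => x hx; apply: hN.
by apply: le_trans hx; rewrite abszE; exact: ler_norm.
Qed.

Section CorrelationIdentity.
Variables (C : numFieldType) (V : VOA C) (B : V -> V -> C).
Hypothesis hB : invariant_bilinear_form B.
Variables (u : V) (N : nat).
Hypotheses (hwt : has_weight N u) (hqp : quasiprimary u) (hN : (1 <= N)%N).
Variable f : nat -> int -> C.
Variables (t n : nat) (vs : 'I_n.+1 -> V) (e : 'I_n.+1 -> int).

Definition sites := enum 'I_n.+1.
Definition sites' := map (lift ord0) (enum 'I_n).

Lemma sitesE : sites = ord0 :: sites'.
Proof. exact: enum_ordSl. Qed.

Lemma sites_uniq : uniq sites.
Proof. exact: enum_uniq. Qed.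

Lemma sites'_uniq : uniq sites'.
Proof. by have := sites_uniq; rewrite sitesE => /andP[]. Qed.

Lemma ord0_notin_sites' : ord0 \notin sites'.
Proof. by have := sites_uniq; rewrite sitesE => /andP[]. Qed.

Lemma mem_sites k : k \in sites.
Proof. exact: mem_enum. Qed.

Lemma sites'_neq0 k : k \in sites' -> k != ord0.
Proof. by move=> hk; apply: contraNneq ord0_notin_sites' => <-. Qed.

Lemma big_sites (M : nmodType) (F : 'I_n.+1 -> M) :
  \sum_(k <- sites) F k = F ord0 + \sum_(k <- sites') F k.
Proof. by rewrite sitesE big_cons. Qed.

Lemma big_sites' (M : nmodType) (F : 'I_n.+1 -> M) :
  \sum_(k < n.+1 | k != ord0) F k = \sum_(k <- sites') F k.
Proof.
rewrite big_mkcond big_ord_recl eqxx /sites' big_map big_enum /= add0r.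
by apply: eq_bigl.
Qed.

Definition modes k := - e k - 1.
Definition m0 := modes ord0.
Definition vsu (j : nat) k := upd vs k (vmode V u j%:Z (vs k)).
Definition rest := mprod vs modes sites'.

(* [v_k] is replaced by [u(j) v_k]; the modes at sites [0] and [k] become [a]
   and [b], so that for [k = 0] the argument [a] is ignored. *)
Definition corr (j : nat) k (a b : int) :=
  B (vacuum V) (mprod (vsu j k) (upd (upd modes ord0 a) k b) sites).

Lemma Z0E vs' e' : Z0 B vs' e' = B (vacuum V) (mprod vs' (fun x => - e' x - 1) sites).
Proof. by []. Qed.

Lemma Z0_upd2 j k a b :
  Z0 B (vsu j k) (upd (upd e ord0 (e ord0 - a)) k (e k - b)) = corr j k (m0 + a) (modes k + b).
Proof.
rewrite Z0E /corr; congr (B _ (mprod _ _ _)); apply: funext => x.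
by rewrite /upd /m0 /modes; case: (x == k); [|case: (x == ord0)]; ring.
Qed.

Lemma Z0_upd j a a' : Z0 B (vsu j ord0) (upd e ord0 (e ord0 - a)) = corr j ord0 a' (m0 + a).
Proof.
rewrite Z0E /corr; congr (B _ (mprod _ _ _)); apply: funext => x.
by rewrite /upd /m0 /modes; case: (x == ord0) => //; ring.
Qed.

Lemma corr0_indep j a a' b : corr j ord0 a b = corr j ord0 a' b.
Proof.
rewrite /corr; congr (B _ (mprod _ _ _)); apply: funext => x.
by rewrite /upd; case: (x == ord0).
Qed.

Lemma mprod_sites_eq0 (vs' : 'I_n.+1 -> V) ms k : vs' k = 0 -> mprod vs' ms sites = 0.
Proof.
move=> h; have /splitPr[s1 s2] := mem_sites k.
by apply: mprod_cat_eq0; rewrite h vmode0l.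
Qed.

Lemma corr_eq0 j k a b : vmode V u j%:Z (vs k) = 0 -> corr j k a b = 0.
Proof. by move=> h; rewrite /corr (@mprod_sites_eq0 _ _ k) ?form0r // /vsu upd_eq. Qed.

Lemma corr_head j k a b : k != ord0 ->
  corr j k a b = B (vacuum V) (vmode V (vs ord0) a (mprod (vsu j k) (upd modes k b) sites')).
Proof.
move=> hk; rewrite /corr sitesE /= /vsu upd_neq 1?eq_sym // upd_neq 1?eq_sym // upd_eq.
congr (B _ (vmode V _ _ _)); apply: eq_mprod => // z /sites'_neq0 hz.
by rewrite /upd; case: (z == k) => //; rewrite (negbTE hz).
Qed.

Lemma corr0_head j a b :
  corr j ord0 a b = B (vacuum V) (vmode V (vmode V u j%:Z (vs ord0)) b rest).
Proof.
rewrite /corr sitesE /= /vsu !upd_eq /rest.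
congr (B _ (vmode V _ _ _)); apply: eq_mprod => z /sites'_neq0 hz.
  by rewrite upd_neq.
by rewrite !upd_neq.
Qed.

(* The mode of [u(j) v_k] acts on the product of the factors to the right of
   site [k], which does not depend on [j], [a] or [b]. *)
Lemma corr_tail_eq0 k : k != ord0 -> exists s : seq 'I_n.+1, forall j a b,
  vmode V (vmode V u j%:Z (vs k)) b (mprod vs modes s) = 0 -> corr j k a b = 0.
Proof.
move=> hk; have [s1 [s2 hsplit]] : exists s1 s2, sites' = s1 ++ k :: s2.
  have : k \in sites' by move: (mem_sites k); rewrite sitesE inE (negbTE hk).
  by case/splitPr=> s1 s2; exists s1, s2.
exists s2 => j a b h.
rewrite /corr sitesE hsplit -cat_cons mprod_cat_eq0 ?form0r //.
have := sites'_uniq; rewrite hsplit cat_uniq cons_uniq => /and3P[_ _ /andP[hk2 _]].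
rewrite /vsu !upd_eq -h; congr (vmode V _ _ _); apply: eq_mprod => z hz.
  by rewrite upd_neq //; apply: contraNneq hk2 => <-.
have hz0 : z != ord0 by apply: sites'_neq0; rewrite hsplit mem_cat inE hz !orbT.
by rewrite !upd_neq //; apply: contraNneq hk2 => <-.
Qed.

Definition nf := N.*2.-1.
Definition df (l : nat) := derL t (f l).
Definition assoc_coef (i : nat) : C := (-1) ^+ t * 'C(i + t, t)%:R.

Definition pole_sum (K j : nat) k :=
  \sum_(i < K) assoc_coef i * 'C(i, j)%:R *
    corr j k (m0 - t%:Z - 1 - i%:Z) (modes k + i%:Z - j%:Z).

Definition regular_sum (A : seq int) (j : nat) k :=
  \sum_(a <- A) \sum_(l < nf) df l a * 'C(l, j)%:R * corr j k (m0 + a) (modes k + l%:Z - j%:Z).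

Definition regular_sum0 (A : seq int) (j : nat) :=
  \sum_(c <- A) \sum_(l < nf)
    df l c * 'C(l, j)%:R * corr j ord0 (m0 + c) (m0 + c + l%:Z - j%:Z).

Lemma assoc_coefE (i : nat) :
  - (((-1) ^+ i * binz C (- t%:Z - 1) i) * (-1) ^+ `|(- t%:Z - 1)|%N) = assoc_coef i.
Proof.
have -> : `|(- t%:Z - 1)|%N = t.+1 by rewrite -opprD abszN; lia.
rewrite binz_neg signrMK /assoc_coef exprS (addnC t) bin_addC.
by rewrite mulN1r mulrN opprK mulrC.
Qed.

Lemma lhs_expand (K : nat) :
  (forall i, (K <= i)%N -> vmode V (vs ord0) (m0 + i%:Z) rest = 0) ->
  (forall i, (K <= i)%N -> vmode V u i%:Z rest = 0) ->
  Z0 B (upd vs ord0 (vmode V u (- t%:Z - 1) (vs ord0))) e =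
  \sum_(k <- sites') \sum_(j < K) pole_sum K j k.
Proof.
move=> hv0 huR; rewrite Z0E sitesE /= upd_eq.
have -> : mprod (upd vs ord0 (vmode V u (- t%:Z - 1) (vs ord0))) modes sites' = rest.
  by apply: eq_mprod => // z hz; rewrite upd_neq // sites'_neq0.
rewrite vmode_associator (@fsum_nat_ord _ K); last first.
  move=> i hi; rewrite huR // vmode0r scaler0 subr0.
  by rewrite (_ : modes ord0 + i%:Z = m0 + i%:Z) // hv0 // vmode0r scaler0.
rewrite (form_sumr hB) /pole_sum.
under [RHS]eq_bigr => k _ do rewrite exchange_big /=.
rewrite [RHS]exchange_big /=; apply: eq_bigr => i _.
rewrite (formZr hB) (formBr hB) (@form_vacuum_mode_eq0 _ _ _ hB N) //; last by lia.
rewrite (formZr hB) sub0r mulrN mulrA -mulNr assoc_coefE.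
rewrite mprod_commutator ?sites'_uniq // vmode_sumr (form_sumr hB) mulr_sumr.
apply: eq_big_seq => k hk.
pose F j := assoc_coef i * 'C(i, j)%:R *
  corr j k (m0 - t%:Z - 1 - i%:Z) (modes k + i%:Z - j%:Z).
rewrite -(@sum_ord_widen _ F i.+1 K) //; last first.
  by move=> j hj; rewrite /F bin_small // mulr0 mul0r.
rewrite vmode_sumr (form_sumr hB) mulr_sumr; apply: eq_bigr => j _.
rewrite /F vmodeZr (formZr hB) mulrA corr_head ?sites'_neq0 //.
by congr (_ * B _ (vmode V _ _ _)); rewrite /m0 /modes; ring.
Qed.

Definition pole_term (j : nat) k (ab : int * int) :=
  der2 t j (inv_xy C) ab.1 ab.2 * corr j k (m0 + ab.1) (modes k + ab.2).

Definition regular_term (j : nat) k (ab : int * int) :=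
  \sum_(l < nf) df l ab.1 * (binz C (ab.2 + j%:Z) j * monoL C l%:Z (ab.2 + j%:Z))
    * corr j k (m0 + ab.1) (modes k + ab.2).

Lemma mul2_psi0E (j : nat) k :
  mul2 ord0 k (der2 t j (psi0 N f)) (Z0 B (vsu j k)) e =
  fsum (fun ab => pole_term j k ab + regular_term j k ab).
Proof.
apply: eq_fsum => -[a b]; rewrite Z0_upd2 /pole_term /regular_term /der2 /psi0 /=.
rewrite mulrDr mulrDl mulr_sumr mulr_suml; congr (_ + _).
by apply: eq_bigr => l _; rewrite /df /derL; ring.
Qed.

(* [1/(x-y)] contributes only at [(a, b) = (-s-1-t, s-j)], with [s >= 0]. *)
Lemma pole_term_eq0 (j K : nat) k :
  (forall (s : nat) a, (K <= s)%N -> corr j k a (modes k + s%:Z - j%:Z) = 0) ->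
  forall ab, ab \notin [seq (- s%:Z - 1 - t%:Z, s%:Z - j%:Z) | s <- iota 0 K] ->
  pole_term j k ab = 0.
Proof.
move=> hs [a b] hnot; rewrite /pole_term /der2 /inv_xy /=.
case: ifP => [/andP[h0 /eqP h1]|_]; last by rewrite !mulr0 mul0r.
have : b + j%:Z = (absz (b + j%:Z))%:Z by rewrite abszE ger0_norm.
move: h1 hnot; set s := absz (b + j%:Z) => h1 hnot hsj.
have hb : b = s%:Z - j%:Z by lia.
have ha : a = - s%:Z - 1 - t%:Z by lia.
case: (ltnP s K) => hsK; last by rewrite hb addrA hs // mulr0.
by move: hnot; rewrite hb ha => /negP[]; apply/mapP; exists s; rewrite // mem_iota.
Qed.

Lemma regular_term_eq0 (j : nat) k (A : seq int) :
  (forall (l : nat) a, (l < nf)%N -> a \notin A ->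
     df l a * corr j k (m0 + a) (modes k + l%:Z - j%:Z) = 0) ->
  forall ab, ab \notin [seq (a, l%:Z - j%:Z) | a <- A, l <- iota 0 nf] ->
  regular_term j k ab = 0.
Proof.
move=> hA [a b] hnot; apply: big1 => l _ /=.
rewrite /monoL; case: eqP => [hb|_]; last by rewrite !mulr0 mul0r.
have hb' : b = l%:Z - j%:Z by rewrite -hb addrK.
have ha : a \notin A.
  apply: contra hnot => ha; apply/allpairsP; exists (a, val l) => /=.
  by rewrite mem_iota ltn_ord hb'.
by rewrite hb' addrA mulr1 mulrAC hA ?ltn_ord // mul0r.
Qed.

Lemma mul2_psi0_expand (j K : nat) k (A : seq int) : uniq A ->
  (forall (s : nat) a, (K <= s)%N -> corr j k a (modes k + s%:Z - j%:Z) = 0) ->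
  (forall (l : nat) a, (l < nf)%N -> a \notin A ->
     df l a * corr j k (m0 + a) (modes k + l%:Z - j%:Z) = 0) ->
  mul2 ord0 k (der2 t j (psi0 N f)) (Z0 B (vsu j k)) e =
  pole_sum K j k + regular_sum A j k.
Proof.
move=> hAu hs hA; rewrite mul2_psi0E (fsumD (pole_term_eq0 hs) (regular_term_eq0 hA)).
- congr (_ + _).
    rewrite big_map big_iota0_ord; apply: eq_bigr => s _.
    rewrite /pole_term /der2 /inv_xy /=.
    have -> : - s%:Z - 1 - t%:Z + t%:Z = - s%:Z - 1 by ring.
    rewrite subrK eqxx le0z_nat /= binz_neg binz_nat mulr1 /assoc_coef.
    by congr (_ * corr _ _ _ _); [rewrite /m0 /modes; ring | rewrite addrA].
  rewrite big_allpairs_dep; apply: eq_bigr => a _.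
  rewrite big_iota0_ord; apply: eq_bigr => l _.
  rewrite /regular_term /= subrK (bigD1 l) //= big1 ?addr0.
    by rewrite /monoL eqxx mulr1 binz_nat addrA.
  move=> l' hl'; rewrite /monoL eqz_nat (inj_eq val_inj) eq_sym (negbTE hl').
  by rewrite !(mulr0, mul0r).
- by rewrite map_inj_uniq ?iota_uniq // => s1 s2 [h _]; lia.
- apply: allpairs_uniq; [exact: hAu | exact: iota_uniq |].
  by move=> [a1 l1] [a2 l2] _ _ /= [-> h]; congr (_, _); lia.
Qed.

Lemma calE_coef (j : nat) (a : int) :
  calE N f t j a = \sum_(l < nf) df l (a - l%:Z + j%:Z) * 'C(l, j)%:R.
Proof.
apply: eq_bigr => l _; rewrite /mulL (@fsumE _ _ [:: a - l%:Z + j%:Z]) //.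
  rewrite big_seq1 /derL /monoL.
  have -> : a - (a - l%:Z + j%:Z) + j%:Z = l%:Z by ring.
  by rewrite eqxx mulr1 binz_nat.
move=> c; rewrite mem_seq1 => /eqP hc; rewrite /derL /monoL.
by case: eqP => h; [exfalso; apply: hc; lia | rewrite !mulr0].
Qed.

Lemma mul1_calE_expand (j K : nat) (lo : int) (cnt : nat) : (j < K)%N ->
  (forall (l : nat) a, (l < nf)%N -> a \notin int_range (lo - K%:Z) (cnt + K) ->
      df l (a - l%:Z + j%:Z) * corr j ord0 0 (m0 + a) = 0) ->
  (forall (l : nat) c, (l < nf)%N -> c \notin int_range lo cnt ->
      df l c * corr j ord0 (m0 + c) (m0 + c + l%:Z - j%:Z) = 0) ->
  mul1 ord0 (calE N f t j) (Z0 B (vsu j ord0)) e = regular_sum0 (int_range lo cnt) j.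
Proof.
move=> hj e2 e3.
pose h (l : nat) (a : int) := df l (a - l%:Z + j%:Z) * 'C(l, j)%:R * corr j ord0 0 (m0 + a).
rewrite /mul1 (@eq_fsum _ _ _ (fun a => \sum_(l < nf) h l a)); last first.
  by move=> a; rewrite calE_coef (Z0_upd _ _ 0) mulr_suml.
rewrite (@fsum_int_range _ (lo - K%:Z) (cnt + K)); last first.
  by move=> a ha; apply: big1 => l _; rewrite /h mulrAC e2 ?mul0r ?ltn_ord ?mem_int_range.
rewrite exchange_big /regular_sum0 [RHS]exchange_big /=; apply: eq_bigr => l _.
rewrite -(@fsum_int_range _ (lo - K%:Z) (cnt + K)); last first.
  by move=> a ha; rewrite /h mulrAC e2 ?mul0r ?ltn_ord ?mem_int_range.
rewrite -(fsum_shift (l%:Z - j%:Z)) (@fsum_int_range _ lo cnt); last first.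
  move=> c hc; rewrite /h (_ : c + (l%:Z - j%:Z) - l%:Z + j%:Z = c); last by ring.
  by rewrite (corr0_indep _ _ (m0 + c)) addrA mulrAC addrA e3 ?mul0r ?ltn_ord ?mem_int_range.
apply: eq_bigr => c _; rewrite /h (_ : c + (l%:Z - j%:Z) - l%:Z + j%:Z = c); last by ring.
by rewrite (corr0_indep _ _ (m0 + c)) !addrA.
Qed.

Lemma vacuum_commutator_sum_eq0 (K l : nat) (c : int) : (l < nf)%N -> (nf <= K)%N ->
  \sum_(j < K) 'C(l, j)%:R * corr j ord0 (m0 + c) (m0 + c + l%:Z - j%:Z)
  + \sum_(k <- sites') \sum_(j < K) 'C(l, j)%:R * corr j k (m0 + c) (modes k + l%:Z - j%:Z)
  = 0.
Proof.
move=> hl hK; have hlK : (l.+1 <= K)%N by apply: leq_trans hK.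
have widen (F : nat -> C) :
    \sum_(j < l.+1) 'C(l, j)%:R * F j = \sum_(j < K) 'C(l, j)%:R * F j.
  by apply: (@sum_ord_widen _ (fun j => 'C(l, j)%:R * F j)) => // j hj; rewrite bin_small // mul0r.
transitivity (B (vacuum V) (vmode V u l%:Z (mprod vs (upd modes ord0 (m0 + c)) sites))); last first.
  by apply: (@form_vacuum_mode_eq0 _ _ _ hB N) => //; move: hl; rewrite /nf -muln2; lia.
rewrite mprod_commutator ?sites_uniq // big_sites (formDr hB) !(form_sumr hB).
congr (_ + _).
  rewrite -(widen (fun j => corr j ord0 (m0 + c) (m0 + c + l%:Z - j%:Z))).
  by apply: eq_bigr => j _; rewrite (formZr hB) upd_eq.
apply: eq_big_seq => k hk; rewrite (form_sumr hB).
rewrite -(widen (fun j => corr j k (m0 + c) (modes k + l%:Z - j%:Z))).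
by apply: eq_bigr => j _; rewrite (formZr hB) upd_neq ?sites'_neq0.
Qed.

Lemma regular_sums_cancel (K : nat) (A : seq int) : (nf <= K)%N ->
  \sum_(j < K) regular_sum0 A j + \sum_(k <- sites') \sum_(j < K) regular_sum A j k = 0.
Proof.
move=> hK.
transitivity (\sum_(c <- A) \sum_(l < nf) df l c *
  (\sum_(j < K) 'C(l, j)%:R * corr j ord0 (m0 + c) (m0 + c + l%:Z - j%:Z)
   + \sum_(k <- sites') \sum_(j < K) 'C(l, j)%:R * corr j k (m0 + c) (modes k + l%:Z - j%:Z))); last first.
  by apply: big1 => c _; apply: big1 => l _; rewrite vacuum_commutator_sum_eq0 ?mulr0.
under [RHS]eq_bigr do under eq_bigr do rewrite mulrDr.
under [RHS]eq_bigr do rewrite big_split /=.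
rewrite [RHS]big_split /=; congr (_ + _).
  rewrite /regular_sum0 exchange_big; apply: eq_bigr => c _.
  rewrite exchange_big; apply: eq_bigr => l _; rewrite mulr_sumr.
  by apply: eq_bigr => j _; rewrite mulrA.
rewrite /regular_sum; under eq_bigr => k _ do rewrite exchange_big /=.
under eq_bigr => k _ do under eq_bigr => a _ do rewrite exchange_big /=.
rewrite exchange_big /=; apply: eq_bigr => a _.
rewrite exchange_big; apply: eq_bigr => l _; rewrite mulr_sumr.
apply: eq_bigr => k _; rewrite mulr_sumr.
by apply: eq_bigr => j _; rewrite mulrA.
Qed.

Lemma corr_eventually_eq0 (J : nat) :
  (forall k j, (J <= j)%N -> vmode V u j%:Z (vs k) = 0) ->
  eventually_ge (fun x => forall k, k \in sites' ->
    forall j (s : nat) a, x <= s%:Z -> corr j k a (modes k + s%:Z - j%:Z) = 0).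
Proof.
move=> hu; apply: eventually_all => k hk.
have [s2 hs2] := corr_tail_eq0 (sites'_neq0 hk).
have [T hT] : eventually_ge (fun x => forall j, j \in iota 0 J ->
    vmode V (vmode V u j%:Z (vs k)) x (mprod vs modes s2) = 0).
  by apply: eventually_all => j _; exact: eventually_vmode0.
exists (T + `|modes k|%N + J)%N => x hx j s a hs.
case: (ltnP j J) => hj; last exact/corr_eq0/hu.
by apply: hs2; apply: hT; [lia | rewrite mem_iota].
Qed.

Lemma coef_identity_bounded (K H : nat) (lo : int) :
  (nf <= K)%N ->
  (forall k j, (K <= j)%N -> vmode V u j%:Z (vs k) = 0) ->
  (forall i, (K <= i)%N -> vmode V (vs ord0) (m0 + i%:Z) rest = 0) ->
  (forall i, (K <= i)%N -> vmode V u i%:Z rest = 0) ->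
  (forall l c, (l < nf)%N -> c < lo -> df l c = 0) ->
  (forall j a b, H%:Z <= b -> corr j ord0 a b = 0) ->
  (forall k j (l : nat) a, k \in sites' -> (l < nf)%N -> H%:Z <= a ->
     corr j k a (modes k + l%:Z - j%:Z) = 0) ->
  (forall k j (s : nat) a, k \in sites' -> (K <= s)%N ->
     corr j k a (modes k + s%:Z - j%:Z) = 0) ->
  Z0 B (upd vs ord0 (vmode V u (- t%:Z - 1) (vs ord0))) e =
  fsum (fun j : nat => mul1 ord0 (calE N f t j) (Z0 B (vsu j ord0)) e)
  + \sum_(k < n.+1 | k != ord0)
      fsum (fun j : nat => mul2 ord0 k (der2 t j (psi0 N f)) (Z0 B (vsu j k)) e).
Proof.
move=> hK hu hv0 huR hdf hcorr0 hcorr_a hcorr_s.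
pose A := int_range lo (absz (H%:Z - m0 - lo)%R + K)%N.
have hA c : c \notin A -> c < lo \/ H%:Z + K%:Z <= m0 + c.
  by rewrite mem_int_range negb_and -ltNge -leNgt => /orP[|]; [left | right; lia].
have hpair k : k \in sites' ->
    fsum (fun j : nat => mul2 ord0 k (der2 t j (psi0 N f)) (Z0 B (vsu j k)) e)
    = \sum_(j < K) pole_sum K j k + \sum_(j < K) regular_sum A j k.
  move=> hk; rewrite -big_split (@fsum_nat_ord _ K) /=; last first.
    move=> j hj; apply: fsum_eq0 => ab.
    by rewrite Z0E (@mprod_sites_eq0 _ _ k) ?form0r ?mulr0 // /vsu upd_eq hu.
  apply: eq_bigr => j _; apply: mul2_psi0_expand; first exact: int_range_uniq.
    by move=> s a; apply: hcorr_s.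
  move=> l a hl /hA[ha|ha]; first by rewrite hdf ?mul0r.
  by rewrite hcorr_a ?mulr0 //; lia.
have hE : fsum (fun j : nat => mul1 ord0 (calE N f t j) (Z0 B (vsu j ord0)) e)
    = \sum_(j < K) regular_sum0 A j.
  rewrite (@fsum_nat_ord _ K); last first.
    move=> j hj; apply: fsum_eq0 => a.
    by rewrite Z0E (@mprod_sites_eq0 _ _ ord0) ?form0r ?mulr0 // /vsu upd_eq hu.
  apply: eq_bigr => j _; have hj := ltn_ord j.
  apply: (@mul1_calE_expand _ K) => // l a hl.
    rewrite mem_int_range negb_and -ltNge -leNgt => /orP[h|h].
      by rewrite hdf ?mul0r //; lia.
    by rewrite hcorr0 ?mulr0 //; lia.
  move=> /hA[hc|hc]; first by rewrite hdf ?mul0r.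
  by rewrite hcorr0 ?mulr0 //; lia.
rewrite (lhs_expand hv0 huR) hE big_sites' (eq_big_seq _ hpair) big_split /=.
by rewrite addrCA regular_sums_cancel // addr0.
Qed.

Hypothesis hf : forall l : nat, (l < N.*2.-1)%N -> laurent (f l).

Lemma coef_identity :
  Z0 B (upd vs ord0 (vmode V u (- t%:Z - 1) (vs ord0))) e =
  fsum (fun j : nat => mul1 ord0 (calE N f t j) (Z0 B (vsu j ord0)) e)
  + \sum_(k < n.+1 | k != ord0)
      fsum (fun j : nat => mul2 ord0 k (der2 t j (psi0 N f)) (Z0 B (vsu j k)) e).
Proof.
have [J hJ] : eventually_ge (fun x => forall k, k \in sites -> vmode V u x (vs k) = 0).
  by apply: eventually_all => k _; exact: eventually_vmode0.
have hu k j : (J <= j)%N -> vmode V u j%:Z (vs k) = 0.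
  by move=> hj; apply: hJ (mem_sites k); rewrite lez_nat.
have [L hL] : eventually_ge (fun x =>
    forall l, l \in iota 0 nf -> forall m, m < - x -> f l m = 0).
  apply: eventually_all => l; rewrite mem_iota add0n => /andP[_ /hf[Ml hMl]].
  by exists `|Ml|%N => x hx m hm; apply: hMl; lia.
have [H hH] : eventually_ge (fun x =>
    (forall j, j \in iota 0 J -> vmode V (vmode V u j%:Z (vs ord0)) x rest = 0) /\
    (forall k, k \in sites' -> forall j, j \in iota 0 J -> forall l, l \in iota 0 nf ->
       vmode V (vs ord0) x (mprod (vsu j k) (upd modes k (modes k + l%:Z - j%:Z)) sites')
       = 0)).
  apply: eventually_and; first by apply: eventually_all => j _; exact: eventually_vmode0.
  apply: eventually_all => k _; apply: eventually_all => j _.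
  by apply: eventually_all => l _; exact: eventually_vmode0.
have [S hS] := corr_eventually_eq0 hu.
have [H1 hH1] := eventually_vmode0 (vs ord0) rest.
have [H2 hH2] := eventually_vmode0 u rest.
apply: (@coef_identity_bounded (absz (H1%:Z - m0) + (H2 + J + nf + S))%N H (- L%:Z - t%:Z)).
- by lia.
- by move=> k j hj; apply: hu; lia.
- by move=> i hi; apply: hH1; lia.
- by move=> i hi; apply: hH2; lia.
- move=> l c hl hc; rewrite /df /derL (hL L%:Z) ?mulr0 ?mem_iota //; lia.
- move=> j a b hb; case: (ltnP j J) => hj; last exact/corr_eq0/hu.
  by rewrite corr0_head (proj1 (hH b hb)) ?form0r // mem_iota.
- move=> k j l a hk hl ha; case: (ltnP j J) => hj; last exact/corr_eq0/hu.
  by rewrite corr_head ?sites'_neq0 // (proj2 (hH a ha)) ?form0r // mem_iota.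
- by move=> k j s a hk hs; apply: hS => //; lia.
Qed.

End CorrelationIdentity.

Theorem mainTheorem3 (R : realType) (V : VOA R[i]) (B : V -> V -> R[i])
  (hCFT : strong_CFT_type V) (hsimple : simple_VOA V)
  (hB : invariant_bilinear_form B) (hnd : nondegenerate_form B)
  (hB1 : B (vacuum V) (vacuum V) = 1)
  (u : V) (N : nat) (hN : (1 <= N)%N)
  (hwt : has_weight N u) (hqp : quasiprimary u)
  (f : nat -> int -> R[i]) (hf : forall l : nat, (l < N.*2.-1)%N -> laurent (f l))
  (t : nat) (n : nat) (vs : 'I_n.+1 -> V) :
  Z0 B (upd vs ord0 (vmode V u (- t%:Z - 1) (vs ord0)))
  = fun e : 'I_n.+1 -> int =>
      fsum (fun j : nat =>
        mul1 ord0 (calE N f t j) (Z0 B (upd vs ord0 (vmode V u j%:Z (vs ord0)))) e)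
      + \sum_(k < n.+1 | k != ord0)
          fsum (fun j : nat =>
            mul2 ord0 k (der2 t j (psi0 N f))
                 (Z0 B (upd vs k (vmode V u j%:Z (vs k)))) e).
Proof. by apply: funext => e; apply: coef_identity. Qed.
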